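(* Let $X$ be an affine Poisson scheme of finite type over $k$ with Poisson bivector $\pi$. Then the $\mathcal O$-saturations of the Lie algebras of Hamiltonian and locally Hamiltonian vector fields coincide: $H(X)^{os}=LH(X)^{os}$. Consequently $M(X,H(X))\cong M(X,LH(X))$.
   Context: $k$ is algebraically closed of characteristic zero. $\tilde\Omega^\bullet_X$ is the algebraic de Rham complex of Kähler differentials modulo torsion. $H(X)$ is the Lie algebra of Hamiltonian vector fields $\xi_f=\pi(df)$, $f\in\mathcal O_X$; $LH(X)$ is the Lie algebra of vector fields $\eta_\alpha=\pi(\alpha)$ for closed one-forms $\alpha\in\tilde\Omega^1_X$. For a Lie algebra of vector fields $\mathfrak v$, its $\mathcal O$-saturation is $\mathfrak v^{os}:=\{\sum_i f_i\xi_i : f_i\in\mathcal O_X,\ \xi_i\in\mathfrak v,\ \sum_i\xi_i(f_i)=0\}$. $M(X,\mathfrak v)$ is the quotient of $\mathcal D_X$ (right $\mathcal D$-modules, defined via embeddings into smooth varieties) by the right submodule generated by $\mathfrak v$. *)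

From HB Require Import structures.
From mathcomp Require Import all_boot all_order all_algebra.
Set Implicit Arguments. Unset Strict Implicit. Unset Printing Implicit Defensive.
Import GRing.Theory.
Local Open Scope ring_scope.

(* An affine scheme X of finite type over k is encoded by its coordinate
   ring A = O(X), a commutative k-algebra generated by a finite sequence. *)
Definition finitely_generated_alg (k : fieldType) (A : comAlgType k) : Prop :=
  exists s : seq A, forall P : pred A,
    GRing.subalg_closed P -> {subset s <= P} -> forall a, P a.

(* Poisson bracket on A (the Poisson bivector pi, via {f,g} = pi(df,dg)). *)
Definition poisson_bracket (k : fieldType) (A : comAlgType k)
    (br : A -> A -> A) : Prop :=
  [/\ forall f, linear (br f),
      forall g, linear (br^~ g),
      forall f g, br f g = - br g f,
      forall f g h, br f (br g h) + br g (br h f) + br h (br f g) = 0 &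
      forall f g h, br f (g * h) = br f g * h + g * br f h].

Definition nonzerodiv (k : fieldType) (A : comAlgType k) (t : A) : Prop :=
  forall a : A, t * a = 0 -> a = 0.

(* Alternating k-bilinear maps A x A -> M that are derivations in each
   argument: by the universal properties of Kaehler differentials and of the
   exterior square, these are exactly the A-linear maps out of
   Omega^2_A = wedge^2_A Omega^1_A, via  B(g,f) = phi(dg /\ df). *)
Definition alt_biderivation (k : fieldType) (A : comAlgType k)
    (M : lmodType A) (B : A -> A -> M) : Prop :=
  [/\ forall g (c : k) a b, B g (c%:A * a + b) = c%:A *: B g a + B g b,
      forall f (c : k) a b, B (c%:A * a + b) f = c%:A *: B a f + B b f,
      forall g a b, B g (a * b) = a *: B g b + b *: B g a,
      forall f a b, B (a * b) f = a *: B b f + b *: B a f &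
      forall a, B a a = 0].

(* A 1-form alpha = sum_i g_i df_i, encoded by the list of pairs (g_i, f_i),
   is closed in the de Rham complex of Kaehler forms modulo torsion iff
   d alpha = sum_i dg_i /\ df_i is a torsion element of Omega^2_A, i.e. is
   killed by some non-zero-divisor t.  Vanishing in Omega^2_A is tested
   against all A-linear maps out of Omega^2_A (universal property). *)
Definition closed_form (k : fieldType) (A : comAlgType k)
    (alpha : seq (A * A)) : Prop :=
  exists2 t : A, nonzerodiv t &
    forall (M : lmodType A) (B : A -> A -> M), alt_biderivation B ->
      t *: (\sum_(p <- alpha) B p.1 p.2) = 0.

Definition hamiltonian (k : fieldType) (A : comAlgType k)
    (br : A -> A -> A) (D : A -> A) : Prop :=
  exists f : A, forall a, D a = br f a.

(* Locally Hamiltonian vector fields eta_alpha = pi(alpha), alpha closed: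
   pi(sum_i g_i df_i) = sum_i g_i {f_i, -}. *)
Definition loc_hamiltonian (k : fieldType) (A : comAlgType k)
    (br : A -> A -> A) (D : A -> A) : Prop :=
  exists2 alpha : seq (A * A), closed_form alpha &
    forall a, D a = \sum_(p <- alpha) p.1 * br p.2 a.

Definition os_sat (k : fieldType) (A : comAlgType k)
    (v : (A -> A) -> Prop) (D : A -> A) : Prop :=
  exists s : seq (A * (A -> A)),
    [/\ foldr (fun p P => v p.2 /\ P) True s,
        \sum_(p <- s) p.2 p.1 = 0 &
        forall a, D a = \sum_(p <- s) p.1 * p.2 a].

From mathcomp Require Import all_boot all_order all_algebra.
Set Implicit Arguments. Unset Strict Implicit. Unset Printing Implicit Defensive.
Import GRing.Theory.
Local Open Scope ring_scope.

(* Every Hamiltonian field is locally Hamiltonian, so [H(X)^os] is contained in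
   [LH(X)^os].  Conversely, a locally Hamiltonian field [sum_i g_i {f_i, -}]
   with [alpha = sum_i g_i df_i] closed is itself in [H(X)^os]: the bracket
   [(g, f) |-> {f, g}] factors through [Omega^2], so closedness of [alpha]
   gives [sum_i {f_i, g_i} = 0].  Since Hamiltonian fields are derivations,
   saturating a family already contained in [H(X)^os] stays in [H(X)^os]. *)

Section Saturation.

Variables (k : fieldType) (A : comAlgType k).
Implicit Types (v w : (A -> A) -> Prop) (s : seq (A * (A -> A))).

Definition all_in v s : Prop := foldr (fun p P => v p.2 /\ P) True s.

Lemma all_in_cat v s1 s2 : all_in v s1 -> all_in v s2 -> all_in v (s1 ++ s2).
Proof. by elim: s1 => //= p s1 IH [vp vs1] vs2; split => //; apply: IH. Qed.

Lemma all_in_sub v w s : (forall D, v D -> w D) -> all_in v s -> all_in w s.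
Proof. by move=> vw; elim: s => //= p s IH [/vw wp /IH]. Qed.

Lemma os_satS v w D : (forall E, v E -> w E) -> os_sat v D -> os_sat w D.
Proof. by move=> vw [s [vs s0 sD]]; exists s; split => //; apply: all_in_sub vs. Qed.

Definition derivation (E : A -> A) : Prop :=
  forall a b, E (a * b) = E a * b + a * E b.

Lemma sum_derivation_scale s c : all_in derivation s ->
  \sum_(p <- s) p.2 (c * p.1) =
    c * \sum_(p <- s) p.2 p.1 + \sum_(p <- s) p.1 * p.2 c.
Proof.
elim: s => [|[g E] s IH] /=; first by rewrite !big_nil mulr0 addr0.
case=> derE /IH; rewrite !big_cons /= derE mulrDr => ->.
by rewrite [E c * g]mulrC [RHS]addrACA [c * E g + _]addrC.
Qed.

(* Replacing each term [c * E] with [E = sum_i g_i E_i] by the terms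
   [(c g_i) E_i] keeps the field, and by the Leibniz rule it changes the
   divergence [sum E(c)] by [c * sum_i E_i g_i = 0]. *)
Lemma os_sat_trans v w D : (forall E, v E -> derivation E) ->
  (forall E, w E -> os_sat v E) -> os_sat w D -> os_sat v D.
Proof.
move=> vder wv [s [ws s0 sD]].
suff [s' [vs' div' field']] : exists s',
    [/\ all_in v s', \sum_(p <- s') p.2 p.1 = \sum_(p <- s) p.2 p.1 &
        forall a, \sum_(p <- s') p.1 * p.2 a = \sum_(p <- s) p.1 * p.2 a].
  by exists s'; split => // [|a]; rewrite ?div' ?field' ?sD.
elim: s ws {s0 sD} => [|[c E] s IH] /=; first by exists [::].
case=> /wv [r [vr r0 rE]] /IH [s' [vs' div' field']].
exists ([seq (c * q.1, q.2) | q <- r] ++ s'); split.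
- apply: all_in_cat => //.
  by elim: r vr {r0 rE} => //= q r IHr [vq /IHr].
- rewrite big_cat big_cons big_map div' /= sum_derivation_scale ?r0.
    by rewrite mulr0 add0r rE.
  exact: all_in_sub vr.
- move=> a; rewrite big_cat big_cons big_map field' /= rE mulr_sumr.
  by congr (_ + _); apply: eq_bigr => q _; rewrite mulrA.
Qed.

End Saturation.

Lemma closed_form_exact (k : fieldType) (A : comAlgType k) (f : A) :
  closed_form [:: (1, f)].
Proof.
exists 1 => [a|M B [_ _ _ Bmul _]]; first by rewrite mul1r.
rewrite big_seq1 scale1r /=.
by have := Bmul f 1 1; rewrite mul1r !scale1r -{1}[B 1 f]addr0 => /addrI <-.
Qed.

Lemma hamiltonian_loc_hamiltonian (k : fieldType) (A : comAlgType k)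
    (br : A -> A -> A) (D : A -> A) :
  hamiltonian br D -> loc_hamiltonian br D.
Proof.
case=> f Df; exists [:: (1, f)]; first exact: closed_form_exact.
by move=> a; rewrite big_seq1 /= mul1r.
Qed.

Section PoissonBracket.

Variables (k : fieldType) (A : comAlgType k) (br : A -> A -> A).
Hypothesis br_poisson : poisson_bracket br.

Lemma hamiltonian_derivation E : hamiltonian br E -> derivation E.
Proof.
case: br_poisson => _ _ _ _ leib [f Ef] a b.
by rewrite !Ef leib mulrC.
Qed.

Hypothesis two_neq0 : (2%:R : k) != 0.

Lemma bracketxx a : br a a = 0.
Proof.
case: br_poisson => _ _ anti _ _.
have twice0 : (2%:R : k) *: br a a = 0.
  by rewrite -[2%:R]/(1 + 1) scalerDl scale1r {1}anti addNr.
by rewrite -[br a a]scale1r -(mulVf two_neq0) -scalerA twice0 scaler0.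
Qed.

(* This is [(g, f) |-> {f, g} = pi(df, dg)], i.e. the A-linear map
   [Omega^2 -> A] given by contraction with [pi]. *)
Lemma bracket_alt_biderivation :
  alt_biderivation (fun g f => (br f g : A^o)).
Proof.
case: br_poisson => lin1 lin2 anti _ leib.
split=> [g c a b|f c a b|g a b|f a b|a] /=.
- rewrite -[RHS]/(c%:A * br a g + br b g) !mulr_algl.
  exact: lin2.
- rewrite -[RHS]/(c%:A * br f a + br f b) !mulr_algl.
  exact: lin1.
- rewrite -[RHS]/(a * br b g + b * br a g) anti leib (anti g a) (anti g b).
  by rewrite mulNr mulrN opprD !opprK addrC [_ * b]mulrC.
- rewrite -[RHS]/(a * br f b + b * br f a) leib.
  by rewrite addrC [_ * b]mulrC.
- exact: bracketxx.
Qed.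

Lemma closed_form_bracket_sum alpha :
  closed_form alpha -> \sum_(q <- alpha) br q.2 q.1 = 0.
Proof.
by case=> t t_reg /(_ _ _ bracket_alt_biderivation) /t_reg.
Qed.

Lemma loc_hamiltonian_os_sat D :
  loc_hamiltonian br D -> os_sat (hamiltonian br) D.
Proof.
case=> alpha alpha_closed Dalpha.
exists [seq (q.1, br q.2) | q <- alpha]; split.
- by elim: alpha {alpha_closed Dalpha} => //= q alpha IH; split=> //; exists q.2.
- by rewrite big_map closed_form_bracket_sum.
- by move=> a; rewrite big_map Dalpha.
Qed.

End PoissonBracket.

Theorem proposition3p11 (k : closedFieldType) (A : comAlgType k)
    (br : A -> A -> A) :
  [pchar k]%R =i pred0 ->
  finitely_generated_alg A ->
  poisson_bracket br ->
  forall D : A -> A, os_sat (hamiltonian br) D <-> os_sat (loc_hamiltonian br) D.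
Proof.
move=> /pcharf0P pchar0 _ br_poisson D; split.
  exact/os_satS/hamiltonian_loc_hamiltonian.
have two_neq0 : (2%:R : k) != 0 by rewrite pchar0.
apply: os_sat_trans => E.
  exact: hamiltonian_derivation.
exact: loc_hamiltonian_os_sat.
Qed.
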